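(* Let $n\ge 2$, let $u^o=(u^o_1,\dots,u^o_n)\in\mathbb{C}^n$ have pairwise distinct coordinates, let $\{u^o\}=\{u^o_1,\dots,u^o_n\}\subset\mathbb{C}_\lambda$, and let $L^o$ be a local system of finite rank on $\mathbb{C}_\lambda\setminus\{u^o\}$. Let $(M^o,\nabla^o)$ be the regular holonomic $\mathbb{C}[\lambda]\langle\partial_\lambda\rangle$-module corresponding to the intermediate extension $j_*L^o$ under the Riemann–Hilbert correspondence (with $j:\mathbb{C}_\lambda\setminus\{u^o\}\hookrightarrow\mathbb{C}_\lambda$), and let $(G^o,\nabla^o)$ be its localized Laplace transform. Fix a $u^o$-admissible argument $\theta^o$, and let $\Psi^o$, $\mathrm{T}_1,\dots,\mathrm{T}_n$ and the pair of Stokes matrices $(S^o_+,S^o_-)$ of $G^o$ be as described in the context. Then for $i\neq j\in\{1,\dots,n\}$, the blocks $(i,j)$ and $(j,i)$ of both $S^o_+$ and $S^o_-$ vanish if and only if \[ (\mathrm{id}-\mathrm{T}_j)|_{\mathrm{im}(\mathrm{id}-\mathrm{T}_i)}=0\quad\text{and}\quad(\mathrm{id}-\mathrm{T}_i)|_{\mathrm{im}(\mathrm{id}-\mathrm{T}_j)}=0. \]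
   Context: The Laplace transform of a $\mathbb{C}[\lambda]\langle\partial_\lambda\rangle$-module $M$ is the $\mathbb{C}[\zeta]\langle\partial_\zeta\rangle$-module equal to $M$ as a vector space, with $\zeta$ acting as $\partial_\lambda$ and $\partial_\zeta$ acting as $-\lambda$; the localized Laplace transform is its tensor product with $\mathbb{C}[\zeta,\zeta^{-1}]$ over $\mathbb{C}[\zeta]$, viewed as a meromorphic connection in the variable $z=\zeta^{-1}$ (irregular pole at $z=0$). Its formalization over $\mathbb{C}(\!(z)\!)$ decomposes into blocks indexed by $i=1,\dots,n$ (of the form $u^o_i\,\mathrm{id}\,\mathrm{d}(1/z)+C_i\,\mathrm{d}z/z$), and Stokes matrices are decomposed into corresponding blocks $(i,j)$. An argument $\theta^o$ is $u^o$-admissible if, for each $i$, the closed real half-line $\ell_i$ with direction $\theta^o$ starting at $u^o_i$ contains no $u^o_j$, $j\neq i$; set $\ell^o=\bigcup_i\ell_i$ and $\ell_i^*=\ell_i\setminus\{u^o_i\}$. Set $\Psi^o=H^2_c(\mathbb{C}_\lambda\setminus\ell^o,L^o)$ and $\Psi^o_i=H^1_c(\ell_i^*,L^o)$, the latter with monodromy $\mathrm{T}_{ii}$ induced by the monodromy of $L^o$ around $u^o_i$; there are natural isomorphisms $h_i:\Psi^o_i\to\Psi^o$, and $\mathrm{T}_i=h_i\mathrm{T}_{ii}h_i^{-1}$ is the $i$-th monodromy on $\Psi^o$. By a result of Malgrange (in the topological form of D'Agnolo–Hien–Morando–Sabbah), there is a pair $(S^o_+,S^o_-)$ of Stokes matrices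 of $G^o$ (with respect to $\theta^o$), with blocks indexed by $i,j$ where the $i$-th block space is $\phi^o_i=\mathrm{im}(\mathrm{id}-\mathrm{T}_i)\subset\Psi^o$, such that for $i\neq j$ the off-diagonal blocks $(i,j)$ and $(j,i)$ are respectively $\mathrm{c}_j\circ\mathrm{v}_i$ and $0$ for $S^o_+$, and $0$ and $-\mathrm{c}_i\circ\mathrm{v}_j$ for $S^o_-$, where $\mathrm{c}_k=(\mathrm{id}-\mathrm{T}_k):\Psi^o\to\phi^o_k$ and $\mathrm{v}_k:\phi^o_k\hookrightarrow\Psi^o$ is the inclusion. The claim concerns this representative $(S^o_+,S^o_-)$. *)

From mathcomp Require Import all_boot all_algebra complex.
From mathcomp Require Import Rstruct.
Set Implicit Arguments. Unset Strict Implicit. Unset Printing Implicit Defensive.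
Import GRing.Theory.
Local Open Scope ring_scope.

Definition C : fieldType := Rdefinitions.R[i].

Section Stokes.
Variables (V : vectType C) (n : nat) (T : 'I_n -> 'End(V)).

Definition cmap (k : 'I_n) : 'End(V) := (\1 - T k)%VF.

Definition phi (k : 'I_n) : {vspace V} := limg (cmap k).

(* Block (a,b) of a block operator on (+)_k phi_k: a linear map phi_a -> phi_b,
   represented by an endomorphism of Psi whose restriction to phi_a is meant.
   Diagonal blocks are irrelevant for the statement; we take them to be id. *)
(* S_+ : block (a,b) is c_b o v_a if a < b, and 0 if a > b. *)
Definition stokes_plus (a b : 'I_n) : 'End(V) :=
  if a == b then \1%VF else if (a < b)%N then cmap b else 0.

(* S_- : block (a,b) is 0 if a < b, and - c_b o v_a if a > b. *)
Definition stokes_minus (a b : 'I_n) : 'End(V) :=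
  if a == b then \1%VF else if (a < b)%N then 0 else - cmap b.

Definition block_vanishes (S : 'I_n -> 'I_n -> 'End(V)) (a b : 'I_n) : Prop :=
  forall v, v \in phi a -> S a b v = 0.

End Stokes.

From mathcomp Require Import all_boot all_algebra complex.
From mathcomp Require Import Rstruct.
Import GRing.Theory.
Local Open Scope ring_scope.

(* For i < j the blocks (i,j) and (j,i) are c_j o v_i and 0 in S_+, and 0 and
   - c_i o v_j in S_-.  So all four vanish exactly when c_j vanishes on phi_i
   and c_i vanishes on phi_j; for j < i exchange i and j. *)

Section StokesBlocks.
Context {V : vectType C} {n : nat} (T : 'I_n -> 'End(V)).

Definition cmap_vanishes_on (b a : 'I_n) : Prop :=
  forall v, v \in phi T a -> cmap T b v = 0.

Lemma block_vanishes_eq0 {S : 'I_n -> 'I_n -> 'End(V)} {a b} :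
  S a b = 0 -> block_vanishes T S a b.
Proof. by move=> Sab0 v _; rewrite Sab0 zero_lfunE. Qed.

Lemma block_vanishes_cmap {S : 'I_n -> 'I_n -> 'End(V)} {a b} :
  S a b = cmap T b -> block_vanishes T S a b <-> cmap_vanishes_on b a.
Proof. by rewrite /block_vanishes => ->. Qed.

Lemma block_vanishes_oppcmap {S : 'I_n -> 'I_n -> 'End(V)} {a b} :
  S a b = - cmap T b -> block_vanishes T S a b <-> cmap_vanishes_on b a.
Proof.
rewrite /block_vanishes => ->; split=> vanish v /vanish; rewrite opp_lfunE.
  by move/eqP; rewrite oppr_eq0 => /eqP.
by move->; rewrite oppr0.
Qed.

Section Ordered.
Variables (a b : 'I_n).
Hypothesis lt_ab : (a < b)%N.

Let neq_ab : (a == b) = false.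
Proof. by rewrite -val_eqE ltn_eqF. Qed.

Let neq_ba : (b == a) = false.
Proof. by rewrite eq_sym neq_ab. Qed.

Lemma stokes_plus_lt : stokes_plus T a b = cmap T b.
Proof. by rewrite /stokes_plus neq_ab lt_ab. Qed.

Lemma stokes_plus_gt : stokes_plus T b a = 0.
Proof. by rewrite /stokes_plus neq_ba (leq_gtF (ltnW lt_ab)). Qed.

Lemma stokes_minus_lt : stokes_minus T a b = 0.
Proof. by rewrite /stokes_minus neq_ab lt_ab. Qed.

Lemma stokes_minus_gt : stokes_minus T b a = - cmap T a.
Proof. by rewrite /stokes_minus neq_ba (leq_gtF (ltnW lt_ab)). Qed.

Lemma stokes_blocks_vanish_lt :
  (block_vanishes T (stokes_plus T) a b /\ block_vanishes T (stokes_plus T) b a /\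
   block_vanishes T (stokes_minus T) a b /\ block_vanishes T (stokes_minus T) b a)
  <-> cmap_vanishes_on b a /\ cmap_vanishes_on a b.
Proof.
have plus_ab := block_vanishes_cmap stokes_plus_lt.
have minus_ba := block_vanishes_oppcmap stokes_minus_gt.
have plus_ba := block_vanishes_eq0 stokes_plus_gt.
have minus_ab := block_vanishes_eq0 stokes_minus_lt.
by split=> [[/plus_ab ? [_ [_ /minus_ba ?]]] | [/plus_ab ? /minus_ba ?]].
Qed.

End Ordered.
End StokesBlocks.

Theorem corollary1p2 (n : nat) (hn : (2 <= n)%N)
  (u : 'I_n -> C) (hu : injective u)
  (Psi : vectType C) (T : 'I_n -> 'End(Psi))
  (hT : forall k, lker (T k) = 0%VS)
  (i j : 'I_n) (hij : i != j) :
  (block_vanishes T (stokes_plus T) i j /\ block_vanishes T (stokes_plus T) j i /\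
   block_vanishes T (stokes_minus T) i j /\ block_vanishes T (stokes_minus T) j i)
  <->
  ((forall v, v \in phi T i -> (\1 - T j)%VF v = 0) /\
   (forall v, v \in phi T j -> (\1 - T i)%VF v = 0)).
Proof.
case: (ltngtP i j) => [lt_ij | lt_ji | eq_ij].
- exact: stokes_blocks_vanish_lt.
- have := stokes_blocks_vanish_lt T j i lt_ji.
  rewrite /cmap_vanishes_on /cmap; tauto.
- by rewrite (val_inj eq_ij) eqxx in hij.
Qed.
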